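(* Suppose that Assumptions (A1) and (A2) hold. Then there is a constant $C>0$ depending only on $\alpha$, $\gamma$, the constants in (A1) and (A2), and $\|V\|_{L^\infty}$ (in particular independent of $\epsilon\in(0,1]$) such that every solution $(u,m)$ of Problem 1 satisfies $$\int_0^1 m^{\alpha+1}\,dx+\int_0^1|u_x|^\gamma(1+m)\,dx+\epsilon\int_0^1\left(u^2+m^2+u_x^2+m_x^2\right)dx\le C.$$ The same bound, with the same constant, holds if $V$ is replaced by $\lambda V$ for any $\lambda\in[0,1]$.
   Context: Let $\mathbb{T}=\mathbb{R}/\mathbb{Z}$ be the one-dimensional torus; functions on $\mathbb{T}$ are identified with $1$-periodic functions on $\mathbb{R}$, and integrals over $\mathbb{T}$ are written $\int_0^1$. Let $H:\mathbb{R}\to\mathbb{R}$ be of class $C^2$, $V:\mathbb{T}\to\mathbb{R}$ continuous, $\alpha>0$, and $0<\epsilon\le 1$. We say $(u,m)$ solves Problem 1 if $u,m\in C^2(\mathbb{T})$, $m>0$ on $\mathbb{T}$, and on $\mathbb{T}$: $$u-u_{xx}+H(u_x)+V(x)=m^\alpha+\epsilon(m-m_{xx}),\qquad m-m_{xx}-(H'(u_x)m)_x=1-\epsilon(u-u_{xx}).$$ Assumptions: (A1) there exist constants $C_1,C_2,C_3>0$ and $\gamma>1$ such that $-C_1+C_2|p|^\gamma\le H(p)\le C_1+C_3|p|^\gamma$ for all $p\in\mathbb{R}$. (A2) There exist constants $\tilde C_1,\tilde C_2,\tilde C_3>0$ such that $-\tilde C_1+\tilde C_2|p|^\gamma\le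 pH'(p)-H(p)\le \tilde C_1+\tilde C_3|p|^\gamma$ for all $p$ (same $\gamma$ as in (A1)). *)

From Stdlib Require Import Reals ClassicalEpsilon.
Open Scope R_scope.

(* 1-periodic functions = functions on the torus T = R/Z *)
Definition periodic1 (f : R -> R) : Prop := forall x, f (x + 1) = f x.

Definition C2_with (f f' f'' : R -> R) : Prop :=
  (forall x, derivable_pt_lim f x (f' x)) /\
  (forall x, derivable_pt_lim f' x (f'' x)) /\
  continuity f''.

(* x^g for x >= 0 and real exponent g > 0, with the convention 0^g = 0
   (Stdlib's Rpower 0 g evaluates to 1, which is wrong here). *)
Definition powr (x g : R) : R := if Rle_dec x 0 then 0 else Rpower x g.

(* Riemann integral over [0,1] (the value of RiemannInt, which does not
   depend on the integrability proof); 0 if f is not Riemann integrable. *)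
Definition Int01 (f : R -> R) : R :=
  epsilon (inhabits 0)
    (fun I => exists pr : Riemann_integrable f 0 1, RiemannInt pr = I).

From Coquelicot Require Import Coquelicot.
From Stdlib Require Import Reals Lra Psatz ClassicalEpsilon FunctionalExtensionality.
Open Scope R_scope.

(** Thanks to the second equation, the density
    [(m - 1) (u - u_xx + eps m_xx) + m u_x H'(u_x) + eps (u^2 + u_x^2 + m_x^2)]
    is the derivative of a periodic flux, so it integrates to zero over the
    torus; by the first equation it equals
    [m^(a+1) - m^a + m (u_x H'(u_x) - H(u_x)) + H(u_x) - lambda V (m - 1)
       + eps (u^2 + u_x^2 + m_x^2 + m^2 - m)].
    (A2) and (A1) bound this from below by [|u_x|^g (1 + m)] up to constants,
    and the absorption [m^a + K m <= m^(a+1)/2 + D] controls the lower-order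
    terms. Only [|lambda V| <= ||V||] and [eps <= 1] enter, so the constant
    depends neither on [lambda] nor on [eps]. *)

Lemma exp_le_compat (x y : R) : x <= y -> exp x <= exp y.
Proof.
intros [hxy | ->]; [apply Rlt_le, exp_increasing, hxy | apply Rle_refl].
Qed.

Lemma powr_ge0 (t g : R) : 0 <= powr t g.
Proof.
unfold powr; destruct (Rle_dec t 0); [lra | apply Rlt_le, exp_pos].
Qed.

Lemma powr_le_self (t g : R) : 1 <= g -> 0 <= t <= 1 -> powr t g <= t.
Proof.
intros hg ht; unfold powr; destruct (Rle_dec t 0) as [|ht0]; [lra|].
assert (hln : ln t <= 0) by (rewrite <- ln_1; apply ln_le; lra).
rewrite <- (exp_ln t) at 2 by lra.
apply exp_le_compat; nra.
Qed.

Lemma continuity_pt_powr_abs (g x : R) :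
  1 <= g -> continuity_pt (fun p => powr (Rabs p) g) x.
Proof.
intros hg; destruct (Req_dec x 0) as [-> | hx].
- apply continuity_pt_locally; intros e.
  exists (mkposreal _ (Rmin_pos 1 e Rlt_0_1 (cond_pos e))); intros y hy.
  change (Rabs (y - 0) < Rmin 1 e) in hy; rewrite Rminus_0_r in hy.
  assert (hy1 := Rlt_le_trans _ _ _ hy (Rmin_l 1 e)).
  assert (hye := Rlt_le_trans _ _ _ hy (Rmin_r 1 e)).
  assert (hpy := powr_le_self (Rabs y) g hg (conj (Rabs_pos y) (Rlt_le _ _ hy1))).
  assert (hp0 := powr_ge0 (Rabs y) g).
  rewrite Rabs_R0; unfold powr at 2; destruct (Rle_dec 0 0); [|lra].
  rewrite Rminus_0_r, Rabs_pos_eq; lra.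
- assert (hx0 : 0 < Rabs x) by (apply Rabs_pos_lt, hx).
  apply (continuity_pt_ext_loc (fun p => Rpower (Rabs p) g)).
  + exists (mkposreal _ hx0); intros y hy.
    change (Rabs (y - x) < Rabs x) in hy.
    unfold powr; destruct (Rle_dec (Rabs y) 0) as [hy0|]; [|reflexivity].
    assert (hy' : y = 0) by (apply Rabs_eq_0; pose proof (Rabs_pos y); lra).
    subst y; rewrite Rminus_0_l, Rabs_Ropp in hy; lra.
  + apply (continuity_pt_comp Rabs (fun t => Rpower t g)); [apply Rcontinuity_abs|].
    apply derivable_continuous_pt.
    exists (g * Rpower (Rabs x) (g - 1)); apply derivable_pt_lim_power, hx0.
Qed.

Lemma Rpower_linear_absorb (a K : R) : 0 < a -> 0 <= K ->
  exists D, 0 <= D /\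
  forall m, 0 < m -> Rpower m a + K * m <= Rpower m a * m / 2 + D.
Proof.
intros ha hK.
(* Beyond [T], [m >= 4] and [m^a >= 4 K], so [m^a] and [K m] are each at most
   a quarter of [m^a m]. *)
set (T := Rmax 4 (exp (4 * K / a))).
assert (hT4 : 4 <= T) by apply Rmax_l.
assert (hTa : 4 * K <= Rpower T a).
{ apply Rle_trans with (Rpower (exp (4 * K / a)) a).
  - unfold Rpower; rewrite ln_exp.
    replace (a * (4 * K / a)) with (4 * K) by (field; lra).
    pose proof (exp_ineq1_le (4 * K)); lra.
  - apply Rle_Rpower_l; [lra | split; [apply exp_pos | apply Rmax_r]]. }
exists (Rpower T a + K * T); split; [nra|].
intros m hm.
assert (hma : 0 < Rpower m a) by apply exp_pos.
destruct (Rle_lt_dec m T) as [hmT | hTm].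
- assert (Rpower m a <= Rpower T a) by (apply Rle_Rpower_l; lra).
  nra.
- assert (Rpower T a <= Rpower m a) by (apply Rle_Rpower_l; lra).
  nra.
Qed.

Lemma Int01_RInt (f : R -> R) : ex_RInt f 0 1 -> Int01 f = RInt f 0 1.
Proof.
intros hf; pose proof (ex_RInt_Reals_0 _ _ _ hf) as pr.
unfold Int01.
destruct (epsilon_spec (inhabits 0)
  (fun I => exists pr : Riemann_integrable f 0 1, RiemannInt pr = I)
  (ex_intro _ _ (ex_intro _ pr eq_refl))) as [pr' <-].
symmetry; apply RInt_Reals.
Qed.

Lemma ex_RInt_continuity (f : R -> R) (a b : R) :
  (forall x, continuity_pt f x) -> ex_RInt f a b.
Proof.
intros hf; apply (@ex_RInt_continuous R_CompleteNormedModule); intros z _.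
apply continuity_pt_filterlim, hf.
Qed.

Lemma periodic1_derivative (f f' : R -> R) :
  periodic1 f -> (forall x, derivable_pt_lim f x (f' x)) -> periodic1 f'.
Proof.
intros hp hd x.
assert (hshift : derivable_pt_lim (fun y => f (y + 1)) x (f' (x + 1))).
{ rewrite <- (Rmult_1_r (f' (x + 1))).
  apply (derivable_pt_lim_comp (fun y => y + 1) f); [|apply hd].
  pose proof (derivable_pt_lim_plus id (fun _ => 1) x 1 0
    (derivable_pt_lim_id x) (derivable_pt_lim_const 1 x)) as hid.
  rewrite Rplus_0_r in hid; exact hid. }
rewrite (functional_extensionality _ _ hp) in hshift.
exact (uniqueness_limite f x _ _ hshift (hd x)).
Qed.

Lemma RInt_derivative_periodic1 (F dF : R -> R) :
  periodic1 F -> (forall x, derivable_pt_lim F x (dF x)) ->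
  (forall x, continuity_pt dF x) -> RInt dF 0 1 = 0.
Proof.
intros hp hd hc.
assert (hFTC : is_RInt dF 0 1 (minus (F 1) (F 0))).
{ apply (is_RInt_derive F dF).
  - intros x _; apply is_derive_Reals, hd.
  - intros x _; apply continuity_pt_filterlim, hc. }
rewrite (is_RInt_unique _ _ _ _ hFTC).
rewrite <- (Rplus_0_l 1) at 1; rewrite (hp 0 : F (0 + 1) = F 0).
exact (minus_eq_zero (F 0)).
Qed.

Lemma RInt_le_div_of_null_integral (f g : R -> R) (c K : R) : 0 < c ->
  ex_RInt f 0 1 -> ex_RInt g 0 1 -> RInt g 0 1 = 0 ->
  (forall x, c * f x <= g x + K) -> RInt f 0 1 <= K / c.
Proof.
intros hc hf hg hg0 hfg.
assert (hK : ex_RInt (fun _ => K) 0 1) by apply ex_RInt_const.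
assert (hcf : RInt (fun x => c * f x) 0 1 = c * RInt f 0 1)
  by exact (RInt_scal f 0 1 c hf).
assert (hgK : RInt (fun x => g x + K) 0 1 = K).
{ assert (hsum : RInt (fun x => g x + K) 0 1 = RInt g 0 1 + RInt (fun _ => K) 0 1)
    by exact (RInt_plus g (fun _ => K) 0 1 hg hK).
  rewrite hsum, hg0, RInt_const; cbn; unfold mult; cbn; ring. }
apply Rmult_le_reg_l with c; [exact hc|].
replace (c * (K / c)) with K by (field; lra).
rewrite <- hcf, <- hgK.
apply RInt_le; [lra | exact (ex_RInt_scal f 0 1 c hf) | | intros x _; apply hfg].
exact (ex_RInt_plus g (fun _ => K) 0 1 hg hK).
Qed.

Lemma continuity_pt_const_fun (k x : R) : continuity_pt (fun _ => k) x.
Proof. apply continuity_pt_const; intros a b; reflexivity. Qed.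

Lemma continuity_pt_pow_comp (f : R -> R) (n : nat) (x : R) :
  continuity_pt f x -> continuity_pt (fun y => f y ^ n) x.
Proof.
intros hf; apply (continuity_pt_comp f (fun t => t ^ n)); [exact hf|].
apply derivable_continuous_pt, derivable_pt_pow.
Qed.

Lemma continuity_pt_Rpower_comp (f : R -> R) (a x : R) :
  0 < f x -> continuity_pt f x -> continuity_pt (fun y => Rpower (f y) a) x.
Proof.
intros hpos hf; apply (continuity_pt_comp f (fun t => Rpower t a)); [exact hf|].
apply derivable_continuous_pt.
exists (a * Rpower (f x) (a - 1)); apply derivable_pt_lim_power, hpos.
Qed.

(* [mA], [h], [h1] and [P] stand for [m^a], [H(u_x)], [H'(u_x)] and [|u_x|^g]. *)
Lemma energy_density_lower_bound
  (c C1 C2 tC1 tC2 M D eps m mA h h1 u1 lv P s : R) :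
  0 < m -> 0 <= mA -> 0 <= P -> 0 <= s -> 0 <= eps <= 1 -> Rabs lv <= M ->
  - C1 + C2 * P <= h -> - tC1 + tC2 * P <= u1 * h1 - h ->
  mA + (1 + tC1 + M) * m <= mA * m / 2 + D ->
  0 <= c <= 1/2 -> c <= C2 -> c <= tC2 ->
  c * (mA * m + P * (1 + m) + eps * (s + m ^ 2))
  <= (m - 1) * (mA + eps * m - h - lv) + m * u1 * h1 + eps * s + (C1 + M + D).
Proof.
intros hm hmA hP hs heps hlv hA1 hA2 hY hc hcC2 hctC2.
assert (hlv' : - M <= lv <= M) by (apply Rabs_le_between; exact hlv).
assert (m * (- tC1 + tC2 * P) <= m * (u1 * h1 - h)) by (apply Rmult_le_compat_l; lra).
assert (0 <= mA * m) by nra.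
assert (0 <= P * m) by nra.
assert (0 <= eps * (s + m ^ 2)) by nra.
assert (c * (mA * m) <= mA * m / 2) by nra.
assert (c * (P * m) <= tC2 * (P * m)) by nra.
assert (c * P <= C2 * P) by nra.
assert (c * (eps * (s + m ^ 2)) <= eps * (s + m ^ 2)) by nra.
assert (lv * m <= M * m) by nra.
nra.
Qed.

Section EnergyEstimate.

Variables (alpha gamma C1 C2 tC1 tC2 M D c lambda eps : R).
Variables (H H' V u u' u'' m m' m'' : R -> R).

Hypothesis Hgamma : 1 <= gamma.
Hypothesis HH' : continuity H'.
Hypothesis HA1 : forall p, - C1 + C2 * powr (Rabs p) gamma <= H p.
Hypothesis HA2 : forall p, - tC1 + tC2 * powr (Rabs p) gamma <= p * H' p - H p.
Hypothesis HV : forall x, Rabs (lambda * V x) <= M.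
Hypothesis Heps : 0 <= eps <= 1.
Hypothesis Hc : 0 < c <= 1/2.
Hypothesis HcC2 : c <= C2.
Hypothesis HctC2 : c <= tC2.
Hypothesis Hyoung : forall y, 0 < y ->
  Rpower y alpha + (1 + tC1 + M) * y <= Rpower y alpha * y / 2 + D.
Hypothesis Hu : C2_with u u' u''.
Hypothesis Hm : C2_with m m' m''.
Hypothesis Hup : periodic1 u.
Hypothesis Hmp : periodic1 m.
Hypothesis Hmpos : forall x, 0 < m x.
Hypothesis E1 : forall x, u x - u'' x + H (u' x) + lambda * V x
                          = Rpower (m x) alpha + eps * (m x - m'' x).
Hypothesis E2 : forall x, derivable_pt_lim (fun y => H' (u' y) * m y) x
                            (m x - m'' x - (1 - eps * (u x - u'' x))).

Let flux x := H' (u' x) * m x * u x + eps * (u x * u' x + m x * m' x)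
  + m' x * u x - u' x * m x + u' x - eps * m' x.

Let density x := (m x - 1) * (u x - u'' x + eps * m'' x)
  + m x * u' x * H' (u' x) + eps * (u x ^ 2 + u' x ^ 2 + m' x ^ 2).

Let energy x := Rpower (m x) (alpha + 1) + powr (Rabs (u' x)) gamma * (1 + m x)
  + eps * (u x ^ 2 + m x ^ 2 + u' x ^ 2 + m' x ^ 2).

Let u_cont x : continuity_pt u x.
Proof. apply derivable_continuous_pt; exists (u' x); apply Hu. Qed.
Let u'_cont x : continuity_pt u' x.
Proof. apply derivable_continuous_pt; exists (u'' x); apply Hu. Qed.
Let u''_cont x : continuity_pt u'' x.
Proof. apply Hu. Qed.
Let m_cont x : continuity_pt m x.
Proof. apply derivable_continuous_pt; exists (m' x); apply Hm. Qed.
Let m'_cont x : continuity_pt m' x.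
Proof. apply derivable_continuous_pt; exists (m'' x); apply Hm. Qed.
Let m''_cont x : continuity_pt m'' x.
Proof. apply Hm. Qed.
Let H'u'_cont x : continuity_pt (fun y => H' (u' y)) x.
Proof. apply (continuity_pt_comp u' H'); [apply u'_cont | apply HH']. Qed.

Local Ltac continuity_pt_auto :=
  repeat first
    [ apply continuity_pt_minus | apply continuity_pt_plus
    | apply continuity_pt_mult | apply continuity_pt_pow_comp
    | apply continuity_pt_const_fun | apply H'u'_cont
    | apply u_cont | apply u'_cont | apply u''_cont
    | apply m_cont | apply m'_cont | apply m''_cont ].

Lemma flux_derivative x : derivable_pt_lim flux x (density x).
Proof.
destruct Hu as [hu [hu' _]]; destruct Hm as [hm [hm' _]].
eassert (hd : derivable_pt_lim flux x _).
{ unfold flux.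
  repeat first
    [ apply E2 | apply derivable_pt_lim_minus | apply derivable_pt_lim_plus
    | apply derivable_pt_lim_mult | apply derivable_pt_lim_const
    | apply hu | apply hu' | apply hm | apply hm' ]. }
match type of hd with derivable_pt_lim _ _ ?d =>
  replace (density x) with d by (unfold density; ring) end.
exact hd.
Qed.

Lemma flux_periodic : periodic1 flux.
Proof.
destruct Hu as [hu _]; destruct Hm as [hm _].
assert (hu'p := periodic1_derivative u u' Hup hu).
assert (hm'p := periodic1_derivative m m' Hmp hm).
unfold periodic1 in *; intro x; unfold flux.
rewrite Hup, Hmp, hu'p, hm'p; reflexivity.
Qed.

Lemma density_continuous x : continuity_pt density x.
Proof. unfold density; continuity_pt_auto. Qed.

Lemma energy_le_density x : c * energy x <= density x + (C1 + M + D).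
Proof.
unfold energy, density.
rewrite Rpower_plus, Rpower_1 by apply Hmpos.
replace (u x - u'' x + eps * m'' x)
  with (Rpower (m x) alpha + eps * m x - H (u' x) - lambda * V x)
  by (pose proof (E1 x); lra).
replace (u x ^ 2 + m x ^ 2 + u' x ^ 2 + m' x ^ 2)
  with ((u x ^ 2 + u' x ^ 2 + m' x ^ 2) + m x ^ 2) by ring.
apply (energy_density_lower_bound c C1 C2 tC1 tC2); try lra.
- apply Hmpos.
- apply Rlt_le, exp_pos.
- apply powr_ge0.
- nra.
- apply HV.
- apply HA1.
- apply HA2.
- apply Hyoung, Hmpos.
Qed.

Lemma energy_integral_bound :
  Int01 (fun x => Rpower (m x) (alpha + 1))
  + Int01 (fun x => powr (Rabs (u' x)) gamma * (1 + m x))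
  + eps * Int01 (fun x => u x ^ 2 + m x ^ 2 + u' x ^ 2 + m' x ^ 2)
  <= (C1 + M + D) / c.
Proof.
assert (i1 : ex_RInt (fun x => Rpower (m x) (alpha + 1)) 0 1).
{ apply ex_RInt_continuity; intro x.
  apply continuity_pt_Rpower_comp; [apply Hmpos | apply m_cont]. }
assert (i2 : ex_RInt (fun x => powr (Rabs (u' x)) gamma * (1 + m x)) 0 1).
{ apply ex_RInt_continuity; intro x; apply continuity_pt_mult.
  - apply (continuity_pt_comp u' (fun p => powr (Rabs p) gamma)).
    + apply u'_cont.
    + apply continuity_pt_powr_abs, Hgamma.
  - continuity_pt_auto. }
assert (i3 : ex_RInt (fun x => u x ^ 2 + m x ^ 2 + u' x ^ 2 + m' x ^ 2) 0 1)
  by (apply ex_RInt_continuity; intro x; continuity_pt_auto).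
rewrite (Int01_RInt _ i1), (Int01_RInt _ i2), (Int01_RInt _ i3).
assert (hsum : is_RInt energy 0 1
  (RInt (fun x => Rpower (m x) (alpha + 1)) 0 1
   + RInt (fun x => powr (Rabs (u' x)) gamma * (1 + m x)) 0 1
   + eps * RInt (fun x => u x ^ 2 + m x ^ 2 + u' x ^ 2 + m' x ^ 2) 0 1)).
{ apply (is_RInt_plus (V := R_NormedModule));
    [apply (is_RInt_plus (V := R_NormedModule)) | apply (is_RInt_scal (V := R_NormedModule))];
    apply (RInt_correct (V := R_CompleteNormedModule)); assumption. }
rewrite <- (is_RInt_unique _ _ _ _ hsum).
apply (RInt_le_div_of_null_integral energy density); [lra | eexists; exact hsum | | |].
- apply ex_RInt_continuity, density_continuous.
- apply (RInt_derivative_periodic1 flux density flux_periodic flux_derivative density_continuous).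
- apply energy_le_density.
Qed.

End EnergyEstimate.

Theorem mainTheorem3
  (alpha gamma C1 C2 C3 tC1 tC2 tC3 M : R)
  (Halpha : 0 < alpha) (Hgamma : 1 < gamma)
  (HC1 : 0 < C1) (HC2 : 0 < C2) (HC3 : 0 < C3)
  (HtC1 : 0 < tC1) (HtC2 : 0 < tC2) (HtC3 : 0 < tC3) :
  exists C : R, 0 < C /\
  forall (H H' H'' V : R -> R),
    C2_with H H' H'' ->
    (* (A1) *)
    (forall p, - C1 + C2 * powr (Rabs p) gamma <= H p /\
               H p <= C1 + C3 * powr (Rabs p) gamma) ->
    (* (A2) *)
    (forall p, - tC1 + tC2 * powr (Rabs p) gamma <= p * H' p - H p /\
               p * H' p - H p <= tC1 + tC3 * powr (Rabs p) gamma) ->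
    continuity V -> periodic1 V ->
    (* M = ||V||_{L^infty} *)
    (forall x, Rabs (V x) <= M) -> (exists x0, Rabs (V x0) = M) ->
  forall (lambda eps : R), 0 <= lambda <= 1 -> 0 < eps <= 1 ->
  forall (u u' u'' m m' m'' : R -> R),
    C2_with u u' u'' -> C2_with m m' m'' ->
    periodic1 u -> periodic1 m ->
    (forall x, 0 < m x) ->
    (* first equation of Problem 1, with V replaced by lambda V *)
    (forall x, u x - u'' x + H (u' x) + lambda * V x
               = Rpower (m x) alpha + eps * (m x - m'' x)) ->
    (* second equation: m - m_xx - (H'(u_x) m)_x = 1 - eps (u - u_xx) *)
    (forall x, derivable_pt_lim (fun y => H' (u' y) * m y) x
                 (m x - m'' x - (1 - eps * (u x - u'' x)))) ->
    Int01 (fun x => Rpower (m x) (alpha + 1))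
    + Int01 (fun x => powr (Rabs (u' x)) gamma * (1 + m x))
    + eps * Int01 (fun x => u x ^ 2 + m x ^ 2 + u' x ^ 2 + m' x ^ 2)
    <= C.
Proof.
(* [M] is known to be nonnegative only once some [V] is given, hence [Rabs M]. *)
assert (hM := Rabs_pos M).
destruct (Rpower_linear_absorb alpha (1 + tC1 + Rabs M) Halpha) as [D [hD hY]];
  [lra|].
set (c := Rmin (1/2) (Rmin tC2 C2)).
assert (hc : 0 < c) by (repeat apply Rmin_pos; lra).
assert (hc1 : c <= 1/2) by apply Rmin_l.
assert (hctC2 : c <= tC2) by (eapply Rle_trans; [apply Rmin_r | apply Rmin_l]).
assert (hcC2 : c <= C2) by (eapply Rle_trans; [apply Rmin_r | apply Rmin_r]).
exists ((C1 + Rabs M + D) / c); split; [apply Rdiv_lt_0_compat; lra|].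
intros H H' H'' V [_ [hH' _]] hA1 hA2 _ _ hVM _ lambda eps hl heps
  u u' u'' m m' m'' hu hm hup hmp hmpos E1 E2.
assert (hlV : forall x, Rabs (lambda * V x) <= Rabs M).
{ intro x; rewrite Rabs_mult, (Rabs_pos_eq lambda) by lra.
  pose proof (hVM x); pose proof (Rabs_pos (V x)); pose proof (RRle_abs M); nra. }
apply (energy_integral_bound alpha gamma C1 C2 tC1 tC2 (Rabs M) D c lambda eps
  H H' V u u' u'' m m' m''); try assumption; try lra.
- intro p; apply derivable_continuous_pt; exists (H'' p); apply hH'.
- intro p; apply hA1.
- intro p; apply hA2.
Qed.
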